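(* Let $G$ be a connected ribbon graph. Then (1) $P_{\langle\delta\rangle}(G,1)=P_{\langle\tau\delta\tau\rangle}(G,1)=2^{e(G)}$, $P_{\langle\delta\tau\rangle}(G,1)=3^{e(G)}$, and $P_{\langle\delta,\tau\rangle}(G,1)=6^{e(G)}$; (2) for each $\bullet\in\{\langle\delta\rangle,\langle\delta\tau\rangle,\langle\tau\delta\tau\rangle,\langle\delta,\tau\rangle\}$ and every $H\in\mathrm{Orb}_\bullet(G)$, $P_\bullet(G,x)=P_\bullet(H,x)$; (3) for each $\bullet\in\{\langle\delta\rangle,\langle\delta\tau\rangle,\langle\tau\delta\tau\rangle,\langle\delta,\tau\rangle\}$, the polynomial $P_\bullet(G,x)$ has minimum degree $1$ and is interpolating, i.e. if its maximum degree is $M$ then the coefficient of $x^k$ is nonzero for every $1\le k\le M$.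
   Context: A ribbon graph $G=(V(G),E(G))$ is a (orientable or non-orientable) surface with boundary, represented as the union of a set $V(G)$ of vertex discs and a set $E(G)$ of edge discs (ribbons) such that vertices and edges intersect in disjoint line segments, each such segment lies on the boundary of exactly one vertex and exactly one edge, and every edge contains exactly two such segments. $v(G)$, $e(G)$ denote the numbers of vertices and edges. For $A\subseteq E(G)$, the partial dual $G^{\delta(A)}$ is obtained by gluing a disc along each boundary component of the spanning ribbon subgraph $(V(G),A)$ (these discs become the vertex discs), removing the interiors of the original vertex discs, and keeping the edge ribbons. The partial Petrial $G^{\tau(A)}$ adds a half-twist to each edge in $A$. For a word $w=w_1\cdots w_n$ over $\{\delta,\tau\}$, $G^{w(A)}=(\cdots(G^{w_n(A)})^{w_{n-1}(A)}\cdots)^{w_1(A)}$ (rightmost letter applied first), $G^{1(A)}=G$, and $G^{\xi(A)\pi(B)}=(G^{\xi(A)})^{\pi(B)}$. Orbits: $\mathrm{Orb}_{\langle\delta\rangle}(G)=\{G^{\delta(A)}:A\subseteq E(G)\}$, $\mathrm{Orb}_{\langle\tau\delta\tau\rangle}(G)=\{G^{\tau\delta\tau(A)}:A\subseteq E(G)\}$, $\mathrm{Orb}_{\langle\delta\tau\rangle}(G)=\{G^{1(A_1)\tau\delta(A_2)\delta\tau(A_3)}\}$ over ordered partitions $(A_1,A_2,A_3)$ of $E(G)$ into pairwise disjoint possibly empty parts, and $\mathrm{Orb}_{\langle\delta,\tau\rangle}(G)=\{G^{1(A_1)\delta(A_2)\tau(A_3)\tau\delta(A_4)\delta\tau(A_5)\tau\delta\tau(A_6)}\}$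 over ordered partitions $(A_1,\dots,A_6)$ of $E(G)$. Vertex polynomials (sums over the same index sets, counted with multiplicity): $P_{\langle\delta\rangle}(G,x)=\sum_{A\subseteq E(G)}x^{v(G^{\delta(A)})}$; $P_{\langle\tau\delta\tau\rangle}(G,x)=\sum_{A\subseteq E(G)}x^{v(G^{\tau\delta\tau(A)})}$; $P_{\langle\delta\tau\rangle}(G,x)=\sum_{(A_1,A_2,A_3)}x^{v(G^{1(A_1)\tau\delta(A_2)\delta\tau(A_3)})}$; $P_{\langle\delta,\tau\rangle}(G,x)=\sum_{(A_1,\dots,A_6)}x^{v(G^{1(A_1)\delta(A_2)\tau(A_3)\tau\delta(A_4)\delta\tau(A_5)\tau\delta\tau(A_6)})}$. *)

(* Ribbon graphs are encoded combinatorially by their flags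
   (graph-encoded maps / "gems"). *)
From mathcomp Require Import all_boot all_algebra.
Set Implicit Arguments. Unset Strict Implicit. Unset Printing Implicit Defensive.
Import GRing.Theory.
Local Open Scope ring_scope.

(* A flag (corner) of an edge ribbon e : (e, end of the edge, side of the edge). *)
Definition Flag (E : finType) : finType := (E * bool * bool)%type.
Definition fedge (E : finType) (x : Flag E) : E := x.1.1.

(* Raw ribbon graph data with edge set E:
   ra = across the attachment segment (same edge end, other side),
   rb = along an edge side (other end),
   rc = along the vertex-disc boundary arc to the next corner,
   riso = number of isolated vertices (vertex discs with no edge). *)
Record ribgraph (E : finType) := RGraph {
  ra : Flag E -> Flag E;
  rb : Flag E -> Flag E;
  rc : Flag E -> Flag E;
  riso : nat }.

Definition is_ribbon (E : finType) (G : ribgraph E) : Prop :=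
  involutive (ra G) /\ involutive (rb G) /\ involutive (rc G) /\
  (forall x, ra G x != x) /\ (forall x, rb G x != x) /\ (forall x, rc G x != x) /\
  (forall x, fedge (ra G x) = fedge x) /\ (forall x, fedge (rb G x) = fedge x) /\
  (forall x, ra G (rb G x) = rb G (ra G x)) /\ (forall x, ra G (rb G x) != x).

Definition norbits (T : finType) (fs : seq (T -> T)) : nat :=
  n_comp (fun x y : T => has (fun f => y == f x) fs) predT.

(* v(G): vertices = boundary components of vertex discs = <ra,rc>-orbits,
   plus isolated vertices *)
Definition nverts (E : finType) (G : ribgraph E) : nat :=
  norbits [:: ra G; rc G] + riso G.

Definition ncomps (E : finType) (G : ribgraph E) : nat :=
  norbits [:: ra G; rb G; rc G] + riso G.
Definition rconnected (E : finType) (G : ribgraph E) : Prop := ncomps G = 1%N.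

Definition pdual (E : finType) (A : {set E}) (G : ribgraph E) : ribgraph E :=
  RGraph (fun x => if fedge x \in A then rb G x else ra G x)
         (fun x => if fedge x \in A then ra G x else rb G x)
         (rc G) (riso G).

Definition ppetrial (E : finType) (A : {set E}) (G : ribgraph E) : ribgraph E :=
  RGraph (ra G)
         (fun x => if fedge x \in A then ra G (rb G x) else rb G x)
         (rc G) (riso G).

Inductive letter := Ld | Lt.
Definition word := seq letter.

Definition op (E : finType) (l : letter) (A : {set E}) (G : ribgraph E) : ribgraph E :=
  match l with Ld => pdual A G | Lt => ppetrial A G end.

(* G^{w(A)}, rightmost letter applied first *)
Definition applyw (E : finType) (w : word) (A : {set E}) (G : ribgraph E) : ribgraph E :=
  foldr (fun l H => op l A H) G w.

(* G^{w_0(A_0) w_1(A_1) ... } = ((G^{w_0(A_0)})^{w_1(A_1)})... *)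
Definition applyseq (E : finType) (G : ribgraph E) (ps : seq (word * {set E})) : ribgraph E :=
  foldl (fun H p => applyw p.1 p.2 H) G ps.

(* the i-th part of an ordered partition encoded as a colouring f *)
Definition part (E : finType) (n : nat) (f : {ffun E -> 'I_n}) (i : nat) : {set E} :=
  [set e | val (f e) == i].

Definition tdt : word := [:: Lt; Ld; Lt].

Definition orbD (E : finType) (G : ribgraph E) (A : {set E}) := applyw [:: Ld] A G.
Definition orbTDT (E : finType) (G : ribgraph E) (A : {set E}) := applyw tdt A G.
Definition orbDT (E : finType) (G : ribgraph E) (f : {ffun E -> 'I_3}) :=
  applyseq G [:: ([::], part f 0); ([:: Lt; Ld], part f 1); ([:: Ld; Lt], part f 2)].
Definition orbALL (E : finType) (G : ribgraph E) (f : {ffun E -> 'I_6}) :=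
  applyseq G [:: ([::], part f 0); ([:: Ld], part f 1); ([:: Lt], part f 2);
                 ([:: Lt; Ld], part f 3); ([:: Ld; Lt], part f 4); (tdt, part f 5)].

Definition P_D (E : finType) (G : ribgraph E) : {poly int} :=
  \sum_(A : {set E}) 'X^(nverts (orbD G A)).
Definition P_TDT (E : finType) (G : ribgraph E) : {poly int} :=
  \sum_(A : {set E}) 'X^(nverts (orbTDT G A)).
Definition P_DT (E : finType) (G : ribgraph E) : {poly int} :=
  \sum_(f : {ffun E -> 'I_3}) 'X^(nverts (orbDT G f)).
Definition P_ALL (E : finType) (G : ribgraph E) : {poly int} :=
  \sum_(f : {ffun E -> 'I_6}) 'X^(nverts (orbALL G f)).

Definition mindeg1 (p : {poly int}) : Prop := p`_0 = 0 /\ p`_1 != 0.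
Definition interpolating (p : {poly int}) : Prop :=
  forall k : nat, (1 <= k <= (size p).-1)%N -> p`_k != 0.

From mathcomp Require Import all_boot all_algebra zify.
From Stdlib Require List.
From Stdlib Require Import FunctionalExtensionality.

Set Implicit Arguments. Unset Strict Implicit. Unset Printing Implicit Defensive.

Import GRing.Theory Num.Theory.

Local Notation root := fingraph.root.

(* Every graph in each orbit of G is [restate G g] for an assignment
   [g] of one of six states to the edges: a state records which of the three
   fixed-point-free involutions a, b, ab of G on the four flags of an edge act
   as the new [ra] and [rb], and partial duals and Petrials permute the states.
   Each vertex polynomial is therefore a sum of x^v over state assignments
   indexed by a group acting simply transitively, which gives (1) by counting
   and (2) by translating the indices.
   For (3), changing the state of one edge changes the number of vertices by at
   most one, so the vertex counts fill an interval. Connectedness gives at least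
   one vertex, and exactly one is attained: minimise the count over assignments
   using two states only; if the minimum exceeded one, some flag would lie in
   another vertex than its partner under the alternative involution, and
   switching the state of its edge would merge vertices. *)

Section GeneratedRelation.

Variable T : finType.

Definition gen_rel (fs : seq (T -> T)) : rel T := fun x y => has (fun f => y == f x) fs.

Lemma gen_relP fs x y : reflect (exists2 f, List.In f fs & y = f x) (gen_rel fs x y).
Proof.
rewrite /gen_rel; elim: fs => [|f fs IH] /=; first by right; case.
apply: (iffP orP) => [[/eqP ->|/IH[g fs_g ->]]|[g [<-|fs_g] y_gx]].
- by exists f; first left.
- by exists g; first right.
- by left; apply/eqP.
- by right; apply/IH; exists g.
Qed.

Lemma connect_gen_rel_sub fs fs' : (forall f, List.In f fs -> List.In f fs') ->
  subrel (connect (gen_rel fs)) (connect (gen_rel fs')).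
Proof.
move=> sub; apply: connect_sub => x y /gen_relP[f /sub fs'_f ->].
by apply/connect1/gen_relP; exists f.
Qed.

Lemma gen_rel_sym fs :
  (forall f, List.In f fs -> involutive f) -> connect_sym (gen_rel fs).
Proof.
move=> invf; apply: sym_connect_sym.
suff gen_rel_rev x y : gen_rel fs x y -> gen_rel fs y x.
  by move=> x y; apply/idP/idP; apply: gen_rel_rev.
by case/gen_relP=> f fs_f ->; apply/gen_relP; exists f; rewrite ?invf.
Qed.

End GeneratedRelation.

Lemma n_comp_roots (T : finType) (r : rel T) : n_comp r predT = #|[set x | roots r x]|.
Proof. by apply: eq_card => x; rewrite !inE andbT. Qed.

Section ComponentCount.

Variables (T : finType) (e e' : rel T).
Hypotheses (sym_e : connect_sym e) (sym_e' : connect_sym e').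

Section Coarser.

Hypothesis sub_ee' : subrel (connect e) (connect e').

Lemma roots_coarser : root e' @: [set x | roots e x] = [set x | roots e' x].
Proof.
apply/setP => r; apply/imsetP/idP => [[z _ ->]|]; first by rewrite inE /roots root_root.
rewrite inE => /eqP rr; exists (root e r); first by rewrite inE /roots root_root.
by rewrite -{1}rr; apply/eqP; rewrite (root_connect sym_e'); apply/sub_ee'/connect_root.
Qed.

Lemma n_comp_coarser : n_comp e' predT <= n_comp e predT.
Proof. by rewrite !n_comp_roots -roots_coarser leq_imset_card. Qed.

Lemma n_comp_coarser_lt x y :
  connect e' x y -> ~~ connect e x y -> n_comp e' predT < n_comp e predT.
Proof.
move=> c'xy; apply: contraR; rewrite -leqNgt !n_comp_roots -roots_coarser.
rewrite leq_eqVlt ltnNge leq_imset_card orbF eq_sym => /imset_injP inj.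
rewrite -(root_connect sym_e); apply/eqP/inj; rewrite ?inE /roots ?root_root //.
apply/(fingraph.rootP sym_e'); apply: connect_trans (connect_trans _ c'xy) _.
  by rewrite sym_e'; apply/sub_ee'/connect_root.
exact/sub_ee'/connect_root.
Qed.

End Coarser.

(* Every [e']-step stays inside an [e]-class or inside the union of the classes
   of [u] and [v], so passing from [e] to [e'] merges at most these two. *)
Lemma n_comp_merge u v :
  (forall x y, e' x y -> connect e x y ||
     (connect e u x || connect e v x) && (connect e u y || connect e v y)) ->
  n_comp e predT <= (n_comp e' predT).+1.
Proof.
move=> step.
pose near z := connect e u z || connect e v z.
pose Q x y := connect e x y || near x && near y.
have nearE x y : connect e x y -> near x = near y.
  by move=> cxy; rewrite /near !(same_connect_r sym_e cxy).
have Q_trans y x z : Q x y -> Q y z -> Q x z.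
  move=> /orP[cxy|/andP[nx ny]] /orP[cyz|/andP[ny' nz]]; rewrite /Q.
  - by rewrite (connect_trans cxy cyz).
  - by rewrite (nearE _ _ cxy) ny' nz orbT.
  - by rewrite nx -(nearE _ _ cyz) ny orbT.
  - by rewrite nx nz orbT.
have connectQ x y : connect e' x y -> Q x y.
  case/connectP=> p + ->; elim: p x => [|z p IH] x /=; first by rewrite /Q connect0.
  by case/andP=> /step exz /IH; apply: Q_trans.
rewrite !n_comp_roots; set S := [set x | roots e x].
have inj : {in S :\ root e v &, injective (root e')}.
  have near_root r : roots e r -> r != root e v -> near r -> r = root e u.
    move=> /eqP er nr /orP[cur|cvr]; first by rewrite -er; apply/esym/(fingraph.rootP sym_e).
    by move/(fingraph.rootP sym_e): cvr nr; rewrite er => ->; rewrite eqxx.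
  move=> r1 r2; rewrite !inE => /andP[r1v root_r1] /andP[r2v root_r2] /eqP.
  rewrite (root_connect sym_e') => /connectQ /orP[|/andP[near_r1 near_r2]].
    by rewrite -(root_connect sym_e) (eqP root_r1) (eqP root_r2) => /eqP.
  by rewrite (near_root _ root_r1 r1v near_r1) (near_root _ root_r2 r2v near_r2).
apply: (@leq_trans (#|S :\ root e v|).+1).
  by rewrite (cardsD1 (root e v) S); case: (_ \in S).
rewrite ltnS -(card_in_imset inj); apply: subset_leq_card.
by apply/subsetP => _ /imsetP[r _ ->]; rewrite inE /roots root_root.
Qed.

End ComponentCount.

(* The alternating [a]/[c]-cycle through [x] contains the step from [x] to
   [a x]; going around the cycle the other way avoids it. The cycle cannot
   fold back on itself because [a] and [c] have no fixed points. *)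
Lemma connect_around_edge (T : finType) (a c : T -> T) (r : rel T) (P : pred T) x :
  involutive a -> involutive c -> (forall y, a y != y) -> (forall y, c y != y) ->
  P x -> (forall y, P y -> P (c y)) -> (forall y, P y -> P (a y)) ->
  (forall y, P y -> r y (c y)) ->
  (forall y, P y -> y != x -> y != a x -> r y (a y)) ->
  connect r x (a x).
Proof.
move=> aK cK a_neq c_neq Px Pc Pa r_c r_a.
pose z i := iter i (a \o c) x.
have zS i : z i.+1 = a (c (z i)) by [].
have Pz i : P (z i) by elim: i => //= i IH; apply/Pa/Pc.
pose back j := (c (z j) == x) || (c (z j) == a x).
have ex_back : exists j, back j.
  have ac_inj : injective (a \o c) by move=> y1 y2 /(inv_inj aK) /(inv_inj cK).
  exists (order (a \o c) x).-1; apply/orP; right; apply/eqP.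
  have := iter_order ac_inj x; case: (order _ x) (order_gt0 (a \o c) x) => // n _.
  by rewrite -/(z n.+1) zS => <-; rewrite aK.
case: (ex_minnP ex_back) => m back_m min_m.
have z_connect i : i <= m -> connect r x (z i).
  elim: i => [|i IH] le_im; first exact: connect0.
  have /norP[ne1 ne2] : ~~ back i by apply: contraTN le_im => /min_m; rewrite -ltnNge.
  apply: connect_trans (IH (ltnW le_im)) (connect_trans (connect1 (r_c _ (Pz i))) _).
  by apply: connect1; rewrite zS; apply: r_a => //; apply: Pc.
have c_connect : connect r x (c (z m)).
  exact: connect_trans (z_connect m (leqnn m)) (connect1 (r_c _ (Pz m))).
case/orP: back_m => /eqP back_m; last by rewrite -back_m.
have mirror k : k <= m -> z (m - k) = c (z k).
  elim: k => [|k IH] le_km; first by rewrite subn0 -[z 0]/x -back_m cK.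
  have /IH : k <= m by apply: ltnW.
  have -> : m - k = (m - k.+1).+1 by lia.
  by rewrite !zS => /(congr1 (c \o a)) /=; rewrite aK cK.
have le_half : m./2 <= m by lia.
have := mirror _ le_half; have := odd_double_half m.
case: (odd m) => /= m_half.
- have -> : m - m./2 = (m./2).+1 by lia.
  by rewrite zS => /eqP; rewrite (negPf (a_neq _)).
- have -> : m - m./2 = m./2 by lia.
  by move=> /esym/eqP; rewrite (negPf (c_neq _)).
Qed.

Lemma discrete_ivt (X : Type) (F d : X -> nat) (y : X) :
  (forall x, d x = 0 -> F x = F y) ->
  (forall x, 0 < d x -> exists2 z, d z < d x & F z <= (F x).+1) ->
  forall x k, F x <= k <= F y -> exists z, F z = k.
Proof.
move=> d0 step x k; move: {2}(d x) (leqnn (d x)) => n.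
elim: n x => [|n IH] x dx Fxk.
  by exists x; move: Fxk; rewrite (d0 x) //; lia.
have [/d0 Fxy|d_pos] := posnP (d x); first by exists x; move: Fxk; rewrite Fxy; lia.
have [z dz Fz] := step x d_pos.
have [Fzk|Fzk] := leqP (F z) k; last by exists x; lia.
by apply: (IH z); [lia|rewrite Fzk; case/andP: Fxk].
Qed.

Lemma ffun_ivt (E I : finType) (F : {ffun E -> I} -> nat) :
  (forall (f f' : {ffun E -> I}) e, (forall e', e' != e -> f e' = f' e') -> F f' <= (F f).+1) ->
  forall f h k, F f <= k <= F h -> exists f', F f' = k.
Proof.
move=> lip f h; apply: (@discrete_ivt _ F (fun f0 => #|[set e | f0 e != h e]|) h) => f0.
  move=> /eqP; rewrite cards_eq0 => /eqP diff0; congr F.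
  by apply/ffunP => e; have := in_set0 e; rewrite -diff0 inE => /negbFE/eqP.
rewrite card_gt0 => /set0Pn[e]; rewrite inE => f0e.
exists [ffun e' => if e' == e then h e else f0 e'].
  apply: proper_card; apply/properP; split.
    by apply/subsetP => e'; rewrite !inE ffunE; case: ifP => [/eqP->|//]; rewrite eqxx.
  by exists e; rewrite !inE ?ffunE ?eqxx.
by apply: (lip _ _ e) => e' /negPf e'e; rewrite ffunE e'e.
Qed.

Inductive eflip := Fa | Fb | Fab.

Definition third_flip (k k' : eflip) : eflip :=
  match k, k' with
  | Fa, Fb | Fb, Fa => Fab
  | Fa, Fab | Fab, Fa => Fb
  | _, _ => Fa
  end.

Definition another_flip (k : eflip) : eflip := if k is Fa then Fb else Fa.

Lemma another_flip_neq k : k <> another_flip k. Proof. by case: k. Qed.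

Lemma eflip_cases k k' k0 : k <> k' -> [\/ k0 = k, k0 = k' | k0 = third_flip k k'].
Proof.
case: k k' k0 => [] [] [] neq;
  first [by apply: Or31 | by apply: Or32 | by apply: Or33 | by case: (neq erefl)].
Qed.

(* Edge states: state [n] is the one reached from state 0 by the [n]-th word of
   1, δ, τ, τδ, δτ, τδτ, and [role_a n], [role_b n] are the flips of the original
   graph acting as [ra] and [rb] in it. Indices above 5 behave as 5. *)
Definition role_a (n : nat) : eflip :=
  match n with 0 => Fa | 1 => Fb | 2 => Fa | 3 => Fb | _ => Fab end.
Definition role_b (n : nat) : eflip :=
  match n with 0 => Fb | 1 => Fa | 2 => Fab | 3 => Fab | 4 => Fa | _ => Fb end.
Definition state_dual (n : nat) : nat :=
  match n with 0 => 1 | 1 => 0 | 2 => 4 | 3 => 5 | 4 => 2 | _ => 3 end.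
Definition state_petrial (n : nat) : nat :=
  match n with 0 => 2 | 1 => 3 | 2 => 0 | 3 => 1 | 4 => 5 | _ => 4 end.

Definition state_op (l : letter) : nat -> nat :=
  match l with Ld => state_dual | Lt => state_petrial end.
Definition wstate (w : word) (n : nat) : nat := foldr state_op n w.

Lemma role_a_dual n : role_a (state_dual n) = role_b n.
Proof. by do 6?case: n => [|n] //. Qed.
Lemma role_b_dual n : role_b (state_dual n) = role_a n.
Proof. by do 6?case: n => [|n] //. Qed.
Lemma role_a_petrial n : role_a (state_petrial n) = role_a n.
Proof. by do 6?case: n => [|n] //. Qed.
Lemma role_b_petrial n : role_b (state_petrial n) = third_flip (role_a n) (role_b n).
Proof. by do 6?case: n => [|n] //. Qed.
Lemma role_a_neq_b n : role_a n <> role_b n.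
Proof. by do 6?case: n => [|n] //. Qed.

Section Restate.

Variables (E : finType) (G : ribgraph E).

Definition flip (k : eflip) (x : Flag E) : Flag E :=
  match k with Fa => ra G x | Fb => rb G x | Fab => ra G (rb G x) end.

Definition restate (g : E -> nat) : ribgraph E :=
  RGraph (fun x => flip (role_a (g (fedge x))) x) (fun x => flip (role_b (g (fedge x))) x)
         (rc G) (riso G).

Definition vrel (g : E -> nat) : rel (Flag E) := gen_rel [:: ra (restate g); rc G].

Lemma nverts_restate g : nverts (restate g) = n_comp (vrel g) predT + riso G.
Proof. by []. Qed.

Lemma restate0 : restate (fun=> 0) = G.
Proof. by rewrite /restate /flip /=; case: G. Qed.

Lemma pdual_restate A g :
  pdual A (restate g) = restate (fun e => if e \in A then state_dual (g e) else g e).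
Proof.
congr RGraph; apply: functional_extensionality => x /=;
  by case: (fedge x \in A); rewrite ?role_a_dual ?role_b_dual.
Qed.

Hypothesis rib : is_ribbon G.

Lemma flip_edge k x : fedge (flip k x) = fedge x.
Proof. by case: rib => [_ [_ [_ [_ [_ [_ [ae [be _]]]]]]]]; case: k => /=; rewrite ?ae ?be. Qed.

Lemma flipK k : involutive (flip k).
Proof.
have [aK [bK [_ [_ [_ [_ [_ [_ [ab _]]]]]]]]] := rib.
by case: k => x /=; rewrite ?aK ?bK // -ab bK aK.
Qed.

Lemma flip_neq k x : flip k x != x.
Proof.
have [_ [_ [_ [a_neq [b_neq [_ [_ [_ [_ ab_neq]]]]]]]]] := rib.
by case: k; rewrite /= ?a_neq ?b_neq ?ab_neq.
Qed.

Lemma flip_flip k k' x : k <> k' -> flip k (flip k' x) = flip (third_flip k k') x.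
Proof.
have [aK [bK [_ [_ [_ [_ [_ [_ [ab _]]]]]]]]] := rib.
by case: k; case: k' => //= _; rewrite ?aK ?bK ?ab ?aK.
Qed.

Lemma flip_neq_flip k k' x : k <> k' -> flip k x != flip k' x.
Proof.
move=> kk'; apply: contraNneq (flip_neq (third_flip k k') x) => eq_kk'.
by rewrite -flip_flip // -eq_kk' flipK.
Qed.

Lemma edge_flags x y : fedge y = fedge x ->
  [\/ y = x, y = flip Fa x, y = flip Fb x | y = flip Fab x].
Proof.
move=> yx; set s := [:: x; flip Fa x; flip Fb x; flip Fab x].
suff : y \in s.
  by rewrite !inE => /or4P[] /eqP ->; [apply: Or41|apply: Or42|apply: Or43|apply: Or44].
apply: contraT => y_out.
pose fib := [set z : Flag E | fedge z == fedge x].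
have fib_le4 : #|fib| <= 4.
  have inj : {in fib &, injective (fun z : Flag E => (z.1.2, z.2) : bool * bool)}.
    by move=> [[e1 p1] q1] [[e2 p2] q2]; rewrite !inE /fedge /= => /eqP-> /eqP-> [-> ->].
  by have := leq_card_in _ _ inj; rewrite card_prod card_bool.
have : 5 <= #|fib|.
  apply/card_geqP; exists (y :: s); split => //.
    rewrite cons_uniq y_out !cons_uniq !inE !negb_or ![x == _]eq_sym.
    by rewrite !flip_neq !flip_neq_flip.
  by move=> z; rewrite !inE => /orP[/eqP->|/or4P[] /eqP->]; rewrite ?yx ?flip_edge.
by move/leq_trans/(_ fib_le4).
Qed.

Lemma edge_flags_by k k' x y : k <> k' -> fedge y = fedge x ->
  [\/ y = x, y = flip k x, y = flip k' x | y = flip k (flip k' x)].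
Proof.
move=> kk' /edge_flags; rewrite flip_flip //.
have flip_cases k0 : [\/ flip k0 x = x, flip k0 x = flip k x, flip k0 x = flip k' x
                      | flip k0 x = flip (third_flip k k') x].
  by case: (eflip_cases k0 kk') => ->; [apply: Or42|apply: Or43|apply: Or44].
by case=> ->; [apply: Or41|apply: flip_cases|apply: flip_cases|apply: flip_cases].
Qed.

Lemma rcK : involutive (rc G).
Proof. by have [_ [_ [cK _]]] := rib. Qed.

Lemma rc_neq x : rc G x != x.
Proof. by have [_ [_ [_ [_ [_ [c_neq _]]]]]] := rib. Qed.

Lemma ra_restate_edge g x : fedge (ra (restate g) x) = fedge x.
Proof. exact: flip_edge. Qed.

Lemma ra_restateK g : involutive (ra (restate g)).
Proof. by move=> x; rewrite /= flip_edge flipK. Qed.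

Lemma ra_restate_neq g x : ra (restate g) x != x.
Proof. exact: flip_neq. Qed.

Lemma ppetrial_restate A g :
  ppetrial A (restate g) = restate (fun e => if e \in A then state_petrial (g e) else g e).
Proof.
congr RGraph; apply: functional_extensionality => x /=; case: (fedge x \in A) => //.
  by rewrite role_a_petrial.
by rewrite flip_edge flip_flip ?role_b_petrial //; apply: role_a_neq_b.
Qed.

Lemma applyw_restate w A g :
  applyw w A (restate g) = restate (fun e => if e \in A then wstate w (g e) else g e).
Proof.
elim: w => [|l w IH] /=.
  by congr restate; apply: functional_extensionality => e; case: (e \in A).
rewrite -/(applyw w A (restate g)) IH.
case: l => /=; rewrite ?pdual_restate ?ppetrial_restate; congr restate;
  by apply: functional_extensionality => e; case: (e \in A).
Qed.

Lemma vrel_sym g : connect_sym (vrel g).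
Proof. by apply: gen_rel_sym => f /= [<-|[<-|[]]]; [apply: ra_restateK|apply: rcK]. Qed.

Lemma vrel_ra g x : vrel g x (ra (restate g) x).
Proof. by rewrite /vrel /gen_rel /= eqxx. Qed.

Lemma vrel_rc g x : vrel g x (rc G x).
Proof. by rewrite /vrel /gen_rel /= eqxx orbT. Qed.

Lemma ra_restate_on g x e : fedge x = e -> ra (restate g) x = flip (role_a (g e)) x.
Proof. by move=> /= ->. Qed.

Lemma ra_restate_agree g g' x :
  g (fedge x) = g' (fedge x) -> ra (restate g) x = ra (restate g') x.
Proof. by move=> /= ->. Qed.

Definition vrel_join g g' : rel (Flag E) := gen_rel [:: ra (restate g); ra (restate g'); rc G].

Lemma vrel_join_sym g g' : connect_sym (vrel_join g g').
Proof.
by apply: gen_rel_sym => f /= [<-|[<-|[<-|[]]]]; apply: ra_restateK || apply: rcK.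
Qed.

Lemma connect_vrel_joinl g g' : subrel (connect (vrel g)) (connect (vrel_join g g')).
Proof. by apply: connect_gen_rel_sub => f /= [<-|[<-|[]]]; [left|do 2!right; left]. Qed.

Lemma connect_vrel_joinr g g' : subrel (connect (vrel g')) (connect (vrel_join g g')).
Proof. by apply: connect_gen_rel_sub => f /= [<-|[<-|[]]]; [right; left|do 2!right; left]. Qed.

Lemma nverts_restate_le e g g' : (forall e', e' != e -> g e' = g' e') ->
  nverts (restate g) <= (nverts (restate g')).+1.
Proof.
move=> gg'; rewrite !nverts_restate -addSn leq_add2r.
apply: (@leq_trans (n_comp (vrel_join g g') predT).+1); last first.
  by rewrite ltnS (n_comp_coarser (vrel_sym g') (vrel_join_sym g g') (@connect_vrel_joinr g g')).
pose u : Flag E := (e, false, false).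
pose v := flip (another_flip (role_a (g e))) u.
have on_e z : fedge z = e -> connect (vrel g) u z || connect (vrel g) v z.
  move=> ze; have ve : fedge v = e by rewrite flip_edge.
  have [->|->|->|->] := edge_flags_by (x := u) (@another_flip_neq (role_a (g e))) ze.
  - by rewrite connect0.
  - by rewrite connect1 // -(ra_restate_on g (erefl : fedge u = e)) vrel_ra.
  - by rewrite connect0 orbT.
  - by rewrite (@connect1 _ _ v) ?orbT // -(ra_restate_on g ve) vrel_ra.
apply: (n_comp_merge (u := u) (v := v) (vrel_sym g) (vrel_join_sym g g')) => x y.
case/gen_relP=> f [<-|[<-|[<-|[]]]] ->.
- by rewrite connect1 ?vrel_ra.
- have [xe|xne] := eqVneq (fedge x) e; first by rewrite !on_e ?orbT ?ra_restate_edge.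
  have -> : ra (restate g') x = ra (restate g) x by apply: ra_restate_agree; rewrite gg'.
  by rewrite connect1 ?vrel_ra.
- by rewrite connect1 ?vrel_rc.
Qed.

Lemma connect_old_ra_partner e g g' p :
  (forall e', e' != e -> g e' = g' e') -> role_a (g e) <> role_a (g' e) -> fedge p = e ->
  ~~ connect (vrel g) p (flip (role_a (g' e)) p) ->
  connect (vrel g') p (ra (restate g) p).
Proof.
move=> gg' kk' pe np.
(* [np] keeps the alternating walk from [p] away from the flags of [e] whose
   [ra]-step changes. *)
apply: (@connect_around_edge _ _ _ _ (connect (vrel g) p) p
         (ra_restateK g) rcK (ra_restate_neq g) rc_neq) => [|y py|y py|y _|y py yp yap].
- exact: connect0.
- exact: connect_trans py (connect1 (vrel_rc g y)).
- exact: connect_trans py (connect1 (vrel_ra g y)).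
- exact: vrel_rc.
have [ye|yne] := eqVneq (fedge y) e; last first.
  by rewrite (@ra_restate_agree g g' y) ?gg' // vrel_ra.
have [y_p|y_a|y_b|y_ab] := edge_flags_by kk' (etrans ye (esym pe)).
- by rewrite y_p eqxx in yp.
- by rewrite y_a (ra_restate_on g pe) eqxx in yap.
- by rewrite -y_b py in np.
case/negP: np; apply: connect_trans py (connect1 _).
have -> : flip (role_a (g' e)) p = ra (restate g) y by rewrite (ra_restate_on g ye) y_ab flipK.
exact: vrel_ra.
Qed.

Lemma nverts_restate_lt e g g' x :
  (forall e', e' != e -> g e' = g' e') -> role_a (g e) <> role_a (g' e) -> fedge x = e ->
  ~~ connect (vrel g) x (flip (role_a (g' e)) x) ->
  nverts (restate g') < nverts (restate g).
Proof.
move=> gg' kk' xe nx; rewrite !nverts_restate ltn_add2r.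
have x'e : fedge (flip (role_a (g' e)) x) = e by rewrite flip_edge.
have near_x := connect_old_ra_partner gg' kk' xe nx.
have near_x' : connect (vrel g') (flip (role_a (g' e)) x)
                               (ra (restate g) (flip (role_a (g' e)) x)).
  by apply: connect_old_ra_partner gg' kk' x'e _; rewrite flipK (vrel_sym g).
have old_partner a : fedge a = e -> connect (vrel g') a (ra (restate g) a).
  move=> ae; have [->|->|->|->] := edge_flags_by kk' (etrans ae (esym xe)).
  - exact: near_x.
  - by rewrite -(ra_restate_on g xe) ra_restateK (vrel_sym g').
  - exact: near_x'.
  - by rewrite -(ra_restate_on g x'e) ra_restateK (vrel_sym g').
apply: (@leq_ltn_trans (n_comp (vrel_join g g') predT)).
  apply: (n_comp_coarser (vrel_join_sym g g') (vrel_sym g')).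
  apply: connect_sub => a b /gen_relP[f [<-|[<-|[<-|[]]]] ->].
  - have [ae|ane] := eqVneq (fedge a) e; first exact: old_partner.
    by rewrite (@ra_restate_agree g g' a) ?gg' // connect1 ?vrel_ra.
  - exact/connect1/vrel_ra.
  - exact/connect1/vrel_rc.
apply: (n_comp_coarser_lt (vrel_sym g) (vrel_join_sym g g') (@connect_vrel_joinl g g') _ nx).
apply/connect1/gen_relP; exists (ra (restate g')); first by right; left.
by rewrite (ra_restate_on g' xe).
Qed.

Section Connected.

Hypothesis conn : rconnected G.

Lemma nverts_restate_gt0 g : 0 < nverts (restate g).
Proof.
rewrite nverts_restate; have [x _|no_flag] := pickP (@predT (Flag E)).
  rewrite addn_gt0 n_comp_roots card_gt0; apply/orP; left; apply/set0Pn.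
  by exists (root (vrel g) x); rewrite inE /roots (root_root (vrel_sym g)).
have n_comp0 (r : rel (Flag E)) : n_comp r predT = 0.
  by rewrite n_comp_roots; apply: eq_card0 => y; move: (no_flag y).
by move: conn; rewrite /rconnected /ncomps /norbits !n_comp0 => ->.
Qed.

Lemma nverts_restate_le1 g :
  (forall x, exists2 k, k <> role_a (g (fedge x)) & connect (vrel g) x (flip k x)) ->
  nverts (restate g) <= 1.
Proof.
move=> vertex_flip; rewrite nverts_restate -conn leq_add2r.
have flip_in_vertex x k0 : connect (vrel g) x (flip k0 x).
  have [k nk cx] := vertex_flip x.
  have [->|->|->] := eflip_cases k0 (nesym nk).
  - exact/connect1/vrel_ra.
  - exact: cx.
  rewrite -flip_flip; last exact: nesym.
  apply: connect_trans cx (connect1 _).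
  by rewrite -(ra_restate_on g (flip_edge k x)) vrel_ra.
have [aK [bK [cK _]]] := rib.
change (n_comp (vrel g) predT <= n_comp (gen_rel [:: ra G; rb G; rc G]) predT).
have sym_G : connect_sym (gen_rel [:: ra G; rb G; rc G]).
  by apply: gen_rel_sym => f [<-|[<-|[<-|[]]]].
apply: (n_comp_coarser sym_G (vrel_sym g)).
apply: connect_sub => x y /gen_relP[f [<-|[<-|[<-|[]]]] ->].
- exact: flip_in_vertex x Fa.
- exact: flip_in_vertex x Fb.
- exact/connect1/vrel_rc.
Qed.

Lemma exists_restate_nverts1 s : role_a s <> Fa ->
  exists T : {set E}, nverts (restate (fun e => if e \in T then s else 0)) = 1.
Proof.
move=> s_Fa; pose g (T : {set E}) e := if e \in T then s else 0.
have [T0 _ minT] := @arg_minnP _ set0 predT (fun T => nverts (restate (g T))) isT.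
exists T0; apply/eqP; rewrite eqn_leq nverts_restate_gt0 andbT.
pose other e := if e \in T0 then Fa else role_a s.
have [all_near|] := boolP [forall x, connect (vrel (g T0)) x (flip (other (fedge x)) x)].
  apply: nverts_restate_le1 => x; exists (other (fedge x)); last exact: (forallP all_near).
  by rewrite /other /g; case: (_ \in T0) => //; apply: nesym.
rewrite negb_forall => /existsP[x far_x].
pose T1 := if fedge x \in T0 then T0 :\ fedge x else fedge x |: T0.
have T1E e : e \in T1 = if e == fedge x then fedge x \notin T0 else e \in T0.
  by rewrite /T1; case: (fedge x \in T0); rewrite !inE; case: eqP => // ->.
have agree e : e != fedge x -> g T0 e = g T1 e by rewrite /g T1E => /negPf ->.
have role_T1 : role_a (g T1 (fedge x)) = other (fedge x).
  by rewrite /g T1E eqxx /other; case: (fedge x \in T0).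
suff : nverts (restate (g T1)) < nverts (restate (g T0)) by rewrite ltnNge minT.
apply: (nverts_restate_lt agree _ (erefl (fedge x))); rewrite role_T1 //.
by rewrite /other /g; case: (fedge x \in T0) => //; apply: nesym.
Qed.

End Connected.

End Restate.

Local Open Scope ring_scope.

Lemma sum_set_ffun (E : finType) (R : nmodType) (phi : {set E} -> R) :
  \sum_(A : {set E}) phi A = \sum_(f : {ffun E -> bool}) phi [set e | f e].
Proof.
rewrite (reindex (fun f : {ffun E -> bool} => [set e | f e])) //.
exists (fun A : {set E} => [ffun e => e \in A]) => [f _|A _].
  by apply/ffunP => e; rewrite ffunE inE.
by apply/setP => e; rewrite inE ffunE.
Qed.

Lemma sum_ffun_reindex (E I : finType) (S : Type) (R : nmodType) (phi : (E -> S) -> R)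
    (u v : E -> I -> S) (p : E -> I -> I) :
  (forall e, injective (p e)) -> (forall e j, u e (p e j) = v e j) ->
  \sum_(f : {ffun E -> I}) phi (fun e => u e (f e)) =
  \sum_(f : {ffun E -> I}) phi (fun e => v e (f e)).
Proof.
move=> p_inj puv.
have pf_inj : injective (fun f : {ffun E -> I} => [ffun e => p e (f e)]).
  by move=> f1 f2 /ffunP f12; apply/ffunP => e; apply: (p_inj e); have := f12 e; rewrite !ffunE.
rewrite (reindex_inj pf_inj); apply: eq_bigr => f _; congr phi.
by apply: functional_extensionality => e; rewrite ffunE puv.
Qed.

Section SumOfMonomials.

Variables (X : finType) (F : X -> nat).

Lemma horner1_sum_Xn : (\sum_x 'X^(F x) : {poly int}).[1] = #|X|%:R.
Proof.
rewrite horner_sum (eq_bigr (fun=> 1)) ?sumr_const // => x _.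
by rewrite hornerXn expr1n.
Qed.

Lemma coef_sum_Xn_neq0 k :
  (\sum_x 'X^(F x) : {poly int})`_k != 0 <-> exists x, F x = k.
Proof.
rewrite coef_sum (eq_bigr (fun x => (F x == k)%:R)) => [|x _]; last by rewrite coefXn eq_sym.
rewrite -natr_sum pnatr_eq0; split=> [nz|[x <-]]; last by rewrite (bigD1 x) //= eqxx.
have [/existsP[x /eqP Fxk]|] := boolP [exists x, F x == k]; first by exists x.
rewrite negb_exists => /forallP none; move: nz; rewrite big1 // => x _.
by rewrite (negPf (none x)).
Qed.

Lemma mindeg1_interpolating_sum_Xn :
  (forall x, 0 < F x)%N -> (exists x, F x = 1%N) ->
  (forall y k, 1 <= k <= F y -> exists x, F x = k)%N ->
  mindeg1 (\sum_x 'X^(F x)) /\ interpolating (\sum_x 'X^(F x)).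
Proof.
move=> F_gt0 [x1 Fx1] ivt; split; [split|].
- apply/eqP; apply: contraT => /coef_sum_Xn_neq0[x Fx0].
  by have := F_gt0 x; rewrite Fx0.
- by apply/coef_sum_Xn_neq0; exists x1.
move=> k /andP[k_gt0 k_le]; apply/coef_sum_Xn_neq0.
have [/existsP[y le_kFy]|] := boolP [exists y, k <= F y]%N; first by apply: (ivt y); rewrite k_gt0.
rewrite negb_exists => /forallP Fk; exfalso.
have : (size ((\sum_x 'X^(F x))%R : {poly int}) <= k)%N.
  apply/leq_sizeP => j le_kj; apply/eqP; apply: contraT => /coef_sum_Xn_neq0[y Fyj].
  by have := Fk y; rewrite Fyj le_kj.
lia.
Qed.

End SumOfMonomials.

Definition set_act (w : word) (b : bool) (s : nat) : nat := if b then wstate w s else s.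

Definition dt_word (j : 'I_3) : word :=
  match val j with 0 => [::] | 1 => [:: Lt; Ld] | _ => [:: Ld; Lt] end.
Definition dt_act (j : 'I_3) : nat -> nat := wstate (dt_word j).

Definition all_word (j : 'I_6) : word :=
  match val j with
  | 0 => [::] | 1 => [:: Ld] | 2 => [:: Lt] | 3 => [:: Lt; Ld] | 4 => [:: Ld; Lt] | _ => tdt
  end.
Definition all_act (j : 'I_6) : nat -> nat := wstate (all_word j).

Section OrbitSums.

Variables (E : finType) (G : ribgraph E).

Definition orbit_sum (I : finType) (act : I -> nat -> nat) (h : E -> nat) : {poly int} :=
  \sum_(f : {ffun E -> I}) 'X^(nverts (restate G (fun e => act (f e) (h e)))).

Lemma orbit_sum_translate (I : finType) (act : I -> nat -> nat) (mul : I -> I -> I) (k : E -> I) :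
  (forall i, injective (mul i)) -> (forall i j, act (mul i j) 0%N = act j (act i 0%N)) ->
  orbit_sum act (fun e => act (k e) 0%N) = orbit_sum act (fun=> 0%N).
Proof.
move=> mul_inj mulE; symmetry.
apply: (sum_ffun_reindex (u := fun _ j => act j 0%N) (v := fun e j => act j (act (k e) 0%N))
         (p := fun e => mul (k e)) (fun h => 'X^(nverts (restate G h)))) => [e|e j].
  exact: mul_inj.
exact: mulE.
Qed.

Hypothesis rib : is_ribbon G.

Lemma orbD_restate h A :
  orbD (restate G h) A = restate G (fun e => set_act [:: Ld] (e \in A) (h e)).
Proof. exact: applyw_restate. Qed.

Lemma orbTDT_restate h A :
  orbTDT (restate G h) A = restate G (fun e => set_act tdt (e \in A) (h e)).
Proof. exact: applyw_restate. Qed.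

Lemma orbDT_restate h f :
  orbDT (restate G h) f = restate G (fun e => dt_act (f e) (h e)).
Proof.
rewrite /orbDT /applyseq /= !(pdual_restate, ppetrial_restate rib); congr restate.
by apply: functional_extensionality => e; rewrite /part !inE; case: (f e) => [[|[|[|//]]] ?].
Qed.

Lemma orbALL_restate h f :
  orbALL (restate G h) f = restate G (fun e => all_act (f e) (h e)).
Proof.
rewrite /orbALL /applyseq /= !(pdual_restate, ppetrial_restate rib); congr restate.
apply: functional_extensionality => e; rewrite /part !inE.
by case: (f e) => [[|[|[|[|[|[|//]]]]]] ?].
Qed.

Lemma P_D_restate h : P_D (restate G h) = orbit_sum (set_act [:: Ld]) h.
Proof.
rewrite /P_D sum_set_ffun; apply: eq_bigr => f _; rewrite orbD_restate.
by congr ('X^(nverts (restate G _))); apply: functional_extensionality => e; rewrite inE.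
Qed.

Lemma P_TDT_restate h : P_TDT (restate G h) = orbit_sum (set_act tdt) h.
Proof.
rewrite /P_TDT sum_set_ffun; apply: eq_bigr => f _; rewrite orbTDT_restate.
by congr ('X^(nverts (restate G _))); apply: functional_extensionality => e; rewrite inE.
Qed.

Lemma P_DT_restate h : P_DT (restate G h) = orbit_sum dt_act h.
Proof. by apply: eq_bigr => f _; rewrite orbDT_restate. Qed.

Lemma P_ALL_restate h : P_ALL (restate G h) = orbit_sum all_act h.
Proof. by apply: eq_bigr => f _; rewrite orbALL_restate. Qed.

Lemma P_D_orbD A : P_D (orbD G A) = P_D G.
Proof.
rewrite -(restate0 G) orbD_restate !P_D_restate.
by apply: (orbit_sum_translate (mul := addb)) => [i|[] []]; first exact: can_inj (addKb i).
Qed.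

Lemma P_TDT_orbTDT A : P_TDT (orbTDT G A) = P_TDT G.
Proof.
rewrite -(restate0 G) orbTDT_restate !P_TDT_restate.
by apply: (orbit_sum_translate (mul := addb)) => [i|[] []]; first exact: can_inj (addKb i).
Qed.

Lemma P_DT_orbDT f : P_DT (orbDT G f) = P_DT G.
Proof.
rewrite -(restate0 G) orbDT_restate !P_DT_restate.
(* The words 1, τδ, δτ are the powers of τδ, which has order 3. *)
apply: (orbit_sum_translate (mul := +%R)) => [i|i j]; first exact: addrI.
by case: i j => [[|[|[|//]]] ?] [[|[|[|//]]] ?].
Qed.

Lemma P_ALL_orbALL f : P_ALL (orbALL G f) = P_ALL G.
Proof.
rewrite -(restate0 G) orbALL_restate !P_ALL_restate.
have lt6 (i j : 'I_6) : (all_act j i < 6)%N.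
  by case: i j => [[|[|[|[|[|[|//]]]]]] ?] [[|[|[|[|[|[|//]]]]]] ?].
have act0 (j : 'I_6) : all_act j 0 = j by case: j => [[|[|[|[|[|[|//]]]]]] ?].
(* States are indexed by the words reaching them from state 0 ([act0]), so the
   word [all_word j] applied after [all_word i] reaches state [all_act j i]. *)
apply: (orbit_sum_translate (mul := fun i j => inord (all_act j i))) => [i j1 j2|i j].
  move/(congr1 (@nat_of_ord _)); rewrite !inordK // => /eqP j12; apply/eqP; move: j12.
  by case: i j1 j2 {lt6 act0} => [[|[|[|[|[|[|//]]]]]] ?] [[|[|[|[|[|[|//]]]]]] ?]
                                [[|[|[|[|[|[|//]]]]]] ?].
by rewrite !act0 inordK.
Qed.

Section Connected.

Hypothesis conn : rconnected G.

Lemma orbit_sum_interpolating (I : finType) (act : I -> nat -> nat) (i0 i1 : I) :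
  act i0 0%N = 0%N -> role_a (act i1 0%N) <> Fa ->
  mindeg1 (orbit_sum act (fun=> 0%N)) /\ interpolating (orbit_sum act (fun=> 0%N)).
Proof.
move=> act0 act1.
pose F (f : {ffun E -> I}) := nverts (restate G (fun e => act (f e) 0%N)).
have [T one_T] := exists_restate_nverts1 rib conn act1.
pose f1 : {ffun E -> I} := [ffun e => if e \in T then i1 else i0].
have F_f1 : F f1 = 1%N.
  rewrite -one_T /F; congr (nverts (restate G _)); apply: functional_extensionality => e.
  by rewrite ffunE; case: (e \in T).
apply: (@mindeg1_interpolating_sum_Xn _ F) => [f||y k Fk].
- exact: nverts_restate_gt0.
- by exists f1.
apply: (@ffun_ivt _ _ F _ f1 y) => [f f' e agree|]; last by rewrite F_f1.
by apply: (nverts_restate_le rib (e := e)) => e' /agree ->.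
Qed.

Lemma P_D_interpolating : mindeg1 (P_D G) /\ interpolating (P_D G).
Proof.
rewrite -(restate0 G) P_D_restate.
exact: (orbit_sum_interpolating (i0 := false) (i1 := true)).
Qed.

Lemma P_TDT_interpolating : mindeg1 (P_TDT G) /\ interpolating (P_TDT G).
Proof.
rewrite -(restate0 G) P_TDT_restate.
exact: (orbit_sum_interpolating (i0 := false) (i1 := true)).
Qed.

Lemma P_DT_interpolating : mindeg1 (P_DT G) /\ interpolating (P_DT G).
Proof.
rewrite -(restate0 G) P_DT_restate.
exact: (orbit_sum_interpolating (i0 := ord0) (i1 := Ordinal (isT : (1 < 3)%N))).
Qed.

Lemma P_ALL_interpolating : mindeg1 (P_ALL G) /\ interpolating (P_ALL G).
Proof.
rewrite -(restate0 G) P_ALL_restate.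
exact: (orbit_sum_interpolating (i0 := ord0) (i1 := Ordinal (isT : (1 < 6)%N))).
Qed.

End Connected.

End OrbitSums.

Theorem mainTheorem5 (E : finType) (G : ribgraph E) :
  is_ribbon G -> rconnected G ->
  (* (1) *)
  ((P_D G).[1] = 2 ^+ #|E| /\ (P_TDT G).[1] = 2 ^+ #|E| /\
   (P_DT G).[1] = 3 ^+ #|E| /\ (P_ALL G).[1] = 6 ^+ #|E|) /\
  (* (2) *)
  ((forall A : {set E}, P_D G = P_D (orbD G A)) /\
   (forall f : {ffun E -> 'I_3}, P_DT G = P_DT (orbDT G f)) /\
   (forall A : {set E}, P_TDT G = P_TDT (orbTDT G A)) /\
   (forall f : {ffun E -> 'I_6}, P_ALL G = P_ALL (orbALL G f))) /\
  (* (3) *)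
  ((mindeg1 (P_D G) /\ interpolating (P_D G)) /\
   (mindeg1 (P_DT G) /\ interpolating (P_DT G)) /\
   (mindeg1 (P_TDT G) /\ interpolating (P_TDT G)) /\
   (mindeg1 (P_ALL G) /\ interpolating (P_ALL G))).
Proof.
move=> rib conn; split; [|split].
- rewrite /P_D /P_TDT /P_DT /P_ALL !horner1_sum_Xn !card_ffun !card_ord.
  by rewrite -(cardsT {set E}) -powersetT card_powerset cardsT !natrX.
- split; [|split; [|split]] => k.
  + by rewrite P_D_orbD.
  + by rewrite P_DT_orbDT.
  + by rewrite P_TDT_orbTDT.
  + by rewrite P_ALL_orbALL.
split; [|split; [|split]].
- exact: P_D_interpolating.
- exact: P_DT_interpolating.
- exact: P_TDT_interpolating.
- exact: P_ALL_interpolating.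
Qed.
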